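(* In the finite element setting described in the context, let each element mass matrix $M_e$ be symmetric positive definite, fix an integer $0<r<m$ and a constant $\alpha>0$, and for each element define $$\overline{M}_e=M_e+\alpha\,V_eV_e^T,\qquad V_e=M_eU_{e,2},$$ where $U_{e,2}\in\mathbb{R}^{m\times r}$ has as columns $M_e$-orthonormal eigenvectors of $(K_e,M_e)$ associated with its $r$ largest eigenvalues $\lambda_{m-r+1}(K_e,M_e),\dots,\lambda_m(K_e,M_e)$. Let $M=\sum_eL_e^TM_eL_e$ and $\overline{M}=\sum_eL_e^T\overline{M}_eL_e$. Then for all $i=1,\dots,n$, $$1\le\frac{\omega_i}{\overline{\omega}_i}\le\sqrt{1+\alpha},$$ where $\omega_i=\sqrt{\lambda_i(K,M)}$ and $\overline{\omega}_i=\sqrt{\lambda_i(K,\overline{M})}$.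
   Context: Finite element setting: there are $n$ global degrees of freedom and $N$ elements, each with $m$ local degrees of freedom. For each element $e$, $L_e\in\mathbb{R}^{m\times n}$ satisfies $L_e^T=[\mathbf{e}_{i_1},\dots,\mathbf{e}_{i_m}]$ for distinct indices $i_1,\dots,i_m$ (columns of $I_n$), and every global index appears for at least one element. Element matrices are assembled as $A=\sum_{e=1}^N L_e^TA_eL_e$. The global stiffness matrix is $K=\sum_e L_e^TK_eL_e$ with each $K_e$ symmetric positive semidefinite, and $K$ is assumed symmetric positive definite. Generalized eigenvalues $\lambda_1(A,B)\le\dots\le\lambda_k(A,B)$ of a pair ($A$ symmetric, $B$ symmetric positive definite) are numbered in ascending order; ''$M_e$-orthonormal'' means $U_{e,2}^TM_eU_{e,2}=I_r$. *)

From mathcomp Require Import all_boot all_order all_algebra.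
Set Implicit Arguments. Unset Strict Implicit. Unset Printing Implicit Defensive.
Import Order.TTheory GRing.Theory Num.Theory.
Local Open Scope ring_scope.

Section Defs.
Variable R : rcfType.

Definition sym_psd n (A : 'M[R]_n) :=
  A^T = A /\ forall x : 'cV[R]_n, 0 <= (x^T *m A *m x) 0 0.
Definition sym_pd n (A : 'M[R]_n) :=
  A^T = A /\ forall x : 'cV[R]_n, x != 0 -> 0 < (x^T *m A *m x) 0 0.

Definition gen_eigs n (A B : 'M[R]_n) (lam : 'I_n -> R) :=
  (forall i j : 'I_n, (i <= j)%N -> lam i <= lam j) /\
  exists X : 'M[R]_n,
    X^T *m B *m X = 1%:M /\ A *m X = B *m X *m diag_mx (\row_i lam i).

Definition Lmat m n (idx : 'I_m -> 'I_n) : 'M[R]_(m, n) :=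
  \matrix_(a < m, b < n) (b == idx a)%:R.

Definition assemble N m n (idx : 'I_N -> 'I_m -> 'I_n)
  (A : 'I_N -> 'M[R]_m) : 'M[R]_n :=
  \sum_(e < N) ((Lmat (idx e))^T *m A e *m Lmat (idx e)).

(* the k-th (0-based) entry of lam, 0 if out of range *)
Definition eig_nth m (lam : 'I_m -> R) (k : nat) : R :=
  nth 0 [seq lam i | i <- enum 'I_m] k.

(* eigenvalues lambda_{m-r+1}, ..., lambda_m (the r largest) *)
Definition top_eigs m r (lam : 'I_m -> R) : 'rV[R]_r :=
  \row_(j < r) eig_nth lam (m - r + j).
End Defs.

(* Both mass matrices are assembled from the same element contributions, and on each element
   M_e <= M_e + alpha (M_e U) (M_e U)^T <= (1 + alpha) M_e in the Loewner order: the lower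
   bound is trivial and the upper one is Bessel's inequality for the M_e-orthonormal columns
   of U. Summing over the elements, (1 + alpha)^-1 Mbar <= M <= Mbar. By the Courant-Fischer
   principle a Loewner comparison of the mass matrices reverses the generalized eigenvalues
   of the common stiffness matrix, so lambar_i <= lam_i <= (1 + alpha) lambar_i, and taking
   square roots gives the bounds on the frequencies. *)
From mathcomp Require Import all_boot all_order all_algebra ring zify.
Import Order.TTheory GRing.Theory Num.Theory.
Set Implicit Arguments. Unset Strict Implicit. Unset Printing Implicit Defensive.
Local Open Scope ring_scope.

Section QuadraticForms.
Variable R : rcfType.

Definition qform n (A : 'M[R]_n) (x : 'cV[R]_n) : R := (x^T *m A *m x) 0 0.

Lemma qformM n (A X : 'M[R]_n) (c : 'cV[R]_n) :
  qform A (X *m c) = qform (X^T *m A *m X) c.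
Proof. by rewrite /qform trmx_mul !mulmxA. Qed.

Lemma qformD n (A B : 'M[R]_n) x : qform (A + B) x = qform A x + qform B x.
Proof. by rewrite /qform mulmxDr mulmxDl mxE. Qed.

Lemma qformZ n a (A : 'M[R]_n) x : qform (a *: A) x = a * qform A x.
Proof. by rewrite /qform -scalemxAr -scalemxAl mxE. Qed.

Lemma qform_diag n (l : 'I_n -> R) c :
  qform (diag_mx (\row_j l j)) c = \sum_j c j 0 ^+ 2 * l j.
Proof.
by rewrite /qform mul_mx_diag mxE; apply: eq_bigr => j _; rewrite !mxE expr2; ring.
Qed.

Lemma qform1 n (c : 'cV[R]_n) : qform 1%:M c = \sum_j c j 0 ^+ 2.
Proof. by rewrite /qform mulmx1 mxE; apply: eq_bigr => j _; rewrite !mxE expr2. Qed.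

Lemma qform1_ge0 n (c : 'cV[R]_n) : 0 <= qform 1%:M c.
Proof. by rewrite qform1 sumr_ge0 // => j _; apply: sqr_ge0. Qed.

Lemma qform1_eq0 n (c : 'cV[R]_n) : (qform 1%:M c == 0) = (c == 0).
Proof.
apply/idP/eqP => [/eqP c0 | ->]; last by rewrite /qform mulmx0 mxE.
apply/matrixP => j k; rewrite (ord1 k) [RHS]mxE; apply/eqP; rewrite -sqrf_eq0.
move: c0; rewrite qform1 => /psumr_eq0P -> //; move=> l _; apply: sqr_ge0.
Qed.

Lemma qform_diag_delta n (l : 'I_n -> R) i :
  qform (diag_mx (\row_j l j)) (delta_mx i 0) = l i.
Proof.
rewrite qform_diag (bigD1 i) //= big1 ?addr0; first by rewrite !mxE !eqxx expr1n mul1r.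
by move=> j /negbTE ji; rewrite mxE ji expr2 !mul0r.
Qed.

Lemma qform_gram n k (P : 'M[R]_(n, k)) y : qform (P *m P^T) y = qform 1%:M (P^T *m y).
Proof. by rewrite /qform mulmx1 trmx_mul trmxK !mulmxA. Qed.

Lemma qform_assemble N m n (idx : 'I_N -> 'I_m -> 'I_n) (F : 'I_N -> 'M[R]_m) x :
  qform (assemble idx F) x = \sum_e qform (F e) (Lmat R (idx e) *m x).
Proof.
rewrite /qform /assemble mulmx_sumr mulmx_suml summxE.
by apply: eq_bigr => e _; rewrite trmx_mul !mulmxA.
Qed.

Lemma sym_pd_psd n (A : 'M[R]_n) : sym_pd A -> sym_psd A.
Proof.
case=> As Apos; split=> // x; case: (eqVneq x 0) => [->|/Apos/ltW //].
by rewrite mulmx0 mxE.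
Qed.

End QuadraticForms.

Section CourantFischer.
Variables (R : rcfType) (n : nat).
Implicit Types (A B C X Y : 'M[R]_n) (l : 'I_n -> R).

Lemma pid_mx_colE k (z : 'cV[R]_n) j :
  (pid_mx k *m z) j 0 = if (j < k)%N then z j 0 else 0.
Proof.
rewrite mxE (bigD1 j) //= big1 ?addr0.
  by rewrite !mxE eqxx /=; case: ifP; rewrite ?mul1r ?mul0r.
move=> l lj; rewrite !mxE; case: eqP => [/val_inj jl|_]; last by rewrite mul0r.
by rewrite jl eqxx in lj.
Qed.

Lemma copid_mx_colE k (z : 'cV[R]_n) j :
  (copid_mx k *m z) j 0 = if (k <= j)%N then z j 0 else 0.
Proof.
rewrite /copid_mx mulmxBl mul1mx.
have -> : (z - pid_mx k *m z) j 0 = z j 0 - (pid_mx k *m z) j 0 by rewrite !mxE.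
rewrite pid_mx_colE.
by case: ltnP; rewrite ?subrr ?subr0.
Qed.

Lemma gen_eigs_congr A B X l :
  X^T *m B *m X = 1%:M -> A *m X = B *m X *m diag_mx (\row_i l i) ->
  X^T *m A *m X = diag_mx (\row_i l i).
Proof. by move=> XBX AX; rewrite -mulmxA AX !mulmxA XBX mul1mx. Qed.

Lemma gen_eigs_ge0 A B l : sym_psd A -> gen_eigs A B l -> forall i, 0 <= l i.
Proof.
move=> [_ Apsd] [_ [X [XBX AX]]] i.
by have := Apsd (X *m delta_mx i 0); rewrite -/(qform _ _) qformM
  (gen_eigs_congr XBX AX) qform_diag_delta.
Qed.

Lemma gen_eigs_gt0 A B l : sym_pd A -> gen_eigs A B l -> forall i, 0 < l i.
Proof.
move=> [_ Apos] [_ [X [XBX AX]]] i.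
have Xi_neq0 : X *m (delta_mx i 0 : 'cV_n) != 0.
  apply/negP => /eqP Xi0.
  have := qform_diag_delta (fun _ => 1 : R) i.
  have -> : diag_mx (\row_j (fun _ => 1 : R) j) = 1%:M :> 'M_n.
    by apply/matrixP => a b; rewrite !mxE.
  rewrite -XBX -qformM Xi0 /qform mulmx0 mxE => /eqP.
  by rewrite eq_sym oner_eq0.
by have := Apos _ Xi_neq0; rewrite -/(qform _ _) qformM
  (gen_eigs_congr XBX AX) qform_diag_delta.
Qed.

(* The span of the first i+1 columns of X and that of the last n-i columns of Y have
   dimensions adding up to n+1, so they meet nontrivially. *)
Lemma head_tail_meet X Y (i : 'I_n) :
  X \in unitmx -> Y \in unitmx ->
  exists c d : 'cV[R]_n,
    X *m (pid_mx i.+1 *m c) = Y *m (copid_mx i *m d) /\ copid_mx i *m d != 0.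
Proof.
move=> Xu Yu.
pose P1 := (pid_mx i.+1 : 'M[R]_n) *m X^T.
pose P2 := (copid_mx i : 'M[R]_n) *m Y^T.
have rP1 : \rank P1 = i.+1.
  by rewrite mxrankMfree ?row_free_unit ?unitmx_tr // rank_pid_mx.
have rP2 : \rank P2 = (n - i)%N.
  by rewrite mxrankMfree ?row_free_unit ?unitmx_tr // rank_copid_mx // ltnW.
have : (P1 :&: P2)%MS != 0.
  rewrite -mxrank_eq0; have := mxrank_sum_cap P1 P2; rewrite rP1 rP2.
  by have := rank_leq_col (P1 + P2)%MS; have := ltn_ord i; move=> *; apply/eqP; lia.
case/rowV0Pn => v vP v_neq0.
have /submxP [D1 vD1] : (v <= P1)%MS by apply: submx_trans vP (capmxSl _ _).
have /submxP [D2 vD2] : (v <= P2)%MS by apply: submx_trans vP (capmxSr _ _).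
have trP2 : P2^T = Y *m copid_mx i.
  by rewrite /P2 trmx_mul trmxK /copid_mx linearB /= trmx1 tr_pid_mx.
have vX : v^T = X *m (pid_mx i.+1 *m D1^T).
  by rewrite vD1 /P1 !trmx_mul trmxK tr_pid_mx mulmxA.
have vY : v^T = Y *m (copid_mx i *m D2^T) by rewrite vD2 trmx_mul trP2 mulmxA.
exists D1^T, D2^T; split; first by rewrite -vX vY.
apply: contra v_neq0 => /eqP d0.
by rewrite -[v]trmxK vY d0 mulmx0 trmx0.
Qed.

Lemma qform_diag_pid_le l (i : 'I_n) (c : 'cV[R]_n) :
  (forall j : 'I_n, (j <= i)%N -> l j <= l i) ->
  qform (diag_mx (\row_j l j)) ((pid_mx i.+1 : 'M_n) *m c)
    <= l i * qform 1%:M ((pid_mx i.+1 : 'M_n) *m c).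
Proof.
move=> l_le; rewrite qform_diag qform1 mulr_sumr; apply: ler_sum => j _.
rewrite pid_mx_colE ltnS; case: ifP => [ji | _]; last by rewrite expr2 !mul0r mulr0.
by rewrite mulrC ler_wpM2r ?sqr_ge0 ?l_le.
Qed.

Lemma qform_diag_copid_ge l (i : 'I_n) (d : 'cV[R]_n) :
  (forall j : 'I_n, (i <= j)%N -> l i <= l j) ->
  l i * qform 1%:M (copid_mx i *m d) <= qform (diag_mx (\row_j l j)) (copid_mx i *m d).
Proof.
move=> l_ge; rewrite qform_diag qform1 mulr_sumr; apply: ler_sum => j _.
rewrite copid_mx_colE; case: ifP => [ij | _]; last by rewrite expr2 !mul0r mulr0.
by rewrite mulrC ler_wpM2l ?sqr_ge0 ?l_ge.
Qed.

(* Courant-Fischer: test both Rayleigh quotients on a vector lying in the span of the first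
   i+1 eigenvectors of (A, B) and of the last n-i eigenvectors of (A, C). *)
Lemma gen_eigs_le_scale A B C l mu (c : R) :
  sym_psd A -> (forall x, qform B x <= c * qform C x) ->
  gen_eigs A B l -> gen_eigs A C mu -> forall i, mu i <= c * l i.
Proof.
move=> Apsd BC gl gm i; have l0 := gen_eigs_ge0 Apsd gl i.
case: gl gm => [lmon [X [XBX AX]]] [mmon [Y [YCY AY]]].
have [_ Xu] := mulmx1_unit XBX; have [_ Yu] := mulmx1_unit YCY.
have [a [d [XY d_neq0]]] := head_tail_meet i Xu Yu.
pose x := Y *m (copid_mx i *m d).
have xA_le : qform A x <= l i * qform B x.
  rewrite /x -XY qformM [qform B _]qformM (gen_eigs_congr XBX AX) XBX.
  by apply: qform_diag_pid_le => j ji; apply: lmon.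
have xA_ge : mu i * qform C x <= qform A x.
  rewrite /x [qform A _]qformM [qform C _]qformM (gen_eigs_congr YCY AY) YCY.
  by apply: qform_diag_copid_ge; apply: mmon.
have xC_gt0 : 0 < qform C x.
  by rewrite /x qformM YCY lt_def qform1_eq0 d_neq0 qform1_ge0.
rewrite -(ler_pM2r xC_gt0); apply: le_trans xA_ge (le_trans xA_le _).
by rewrite [c * l i]mulrC -mulrA ler_wpM2l.
Qed.

End CourantFischer.

Section MassUpdate.
Variable R : rcfType.

Lemma qform_bessel m r (M : 'M[R]_m) (U : 'M[R]_(m, r)) y :
  sym_psd M -> U^T *m M *m U = 1%:M -> qform 1%:M ((M *m U)^T *m y) <= qform M y.
Proof.
move=> [Ms Mpsd] UMU.
set z := (M *m U)^T *m y.
have zT : z^T = y^T *m M *m U by rewrite /z trmx_mul trmxK mulmxA.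
have Uz : U^T *m M *m y = z by rewrite /z trmx_mul Ms.
clearbody z.
have zUMUz : z^T *m (U^T *m M *m U) *m z = z^T *m z by rewrite UMU mulmx1.
have zUMy : z^T *m (U^T *m M *m y) = z^T *m z by rewrite Uz.
rewrite !mulmxA in zUMUz zUMy.
have := Mpsd (y - U *m z).
rewrite [(_ - _)^T]linearB /= trmx_mul mulmxBl !mulmxBr !mulmxBl !mulmxA.
by rewrite -zT zUMUz zUMy /qform mulmx1 subrr subr0 !mxE subr_ge0.
Qed.

Lemma qform_mass_update m r (M : 'M[R]_m) (U : 'M[R]_(m, r)) (a : R) y :
  sym_psd M -> U^T *m M *m U = 1%:M -> 0 <= a ->
  qform M y <= qform (M + a *: ((M *m U) *m (M *m U)^T)) y <= (1 + a) * qform M y.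
Proof.
move=> Mpsd UMU a0; rewrite qformD qformZ qform_gram lerDl mulr_ge0 ?qform1_ge0 //=.
by rewrite mulrDl mul1r lerD2l ler_wpM2l // qform_bessel.
Qed.

Lemma sqrt_ratio_bounds (a b c : R) :
  0 < b -> b <= a -> a <= c * b -> 1 <= Num.sqrt a / Num.sqrt b <= Num.sqrt c.
Proof.
move=> b_gt0 ba acb; have a_gt0 := lt_le_trans b_gt0 ba.
have c_ge0 : 0 <= c by rewrite -(pmulr_lge0 _ b_gt0) (le_trans (ltW a_gt0)).
have sb_gt0 : 0 < Num.sqrt b by rewrite sqrtr_gt0.
apply/andP; split; first by rewrite ler_pdivlMr // mul1r ler_sqrt // ltW.
by rewrite ler_pdivrMr // -sqrtrM // ler_sqrt // mulr_ge0 // ltW.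
Qed.

End MassUpdate.

Theorem mainTheorem3 (R : rcfType) (n m N r : nat)
  (idx : 'I_N -> 'I_m -> 'I_n)
  (Ke Me : 'I_N -> 'M[R]_m) (U : 'I_N -> 'M[R]_(m, r))
  (lamE : 'I_N -> 'I_m -> R) (alpha : R)
  (lam lamb : 'I_n -> R) :
  (forall e, injective (idx e)) ->
  (forall g : 'I_n, exists e a, idx e a = g) ->
  (forall e, sym_psd (Ke e)) ->
  (forall e, sym_pd (Me e)) ->
  sym_pd (assemble idx Ke) ->
  (0 < r)%N -> (r < m)%N -> 0 < alpha ->
  (forall e, gen_eigs (Ke e) (Me e) (lamE e)) ->
  (forall e, (U e)^T *m Me e *m U e = 1%:M) ->
  (forall e, Ke e *m U e = Me e *m U e *m diag_mx (top_eigs r (lamE e))) ->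
  gen_eigs (assemble idx Ke) (assemble idx Me) lam ->
  gen_eigs (assemble idx Ke)
    (assemble idx (fun e => Me e + alpha *: ((Me e *m U e) *m (Me e *m U e)^T)))
    lamb ->
  forall i : 'I_n,
    1 <= Num.sqrt (lam i) / Num.sqrt (lamb i) <= Num.sqrt (1 + alpha).
Proof.
move=> _ _ _ Mpd Kpd _ _ alpha_gt0 _ UMU _ eigs eigsb i.
pose Mbar e := Me e + alpha *: ((Me e *m U e) *m (Me e *m U e)^T).
have Kpsd := sym_pd_psd Kpd.
have elem_bounds e y := qform_mass_update y (sym_pd_psd (Mpd e)) (UMU e) (ltW alpha_gt0).
have M_le x : qform (assemble idx Me) x <= 1 * qform (assemble idx Mbar) x.
  rewrite mul1r !qform_assemble; apply: ler_sum => e _.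
  by case/andP: (elem_bounds e (Lmat R (idx e) *m x)).
have Mbar_le x : qform (assemble idx Mbar) x <= (1 + alpha) * qform (assemble idx Me) x.
  rewrite !qform_assemble mulr_sumr; apply: ler_sum => e _.
  by case/andP: (elem_bounds e (Lmat R (idx e) *m x)).
have := gen_eigs_le_scale Kpsd M_le eigs eigsb i; rewrite mul1r => lamb_le.
have lam_le := gen_eigs_le_scale Kpsd Mbar_le eigsb eigs i.
exact: sqrt_ratio_bounds (gen_eigs_gt0 Kpd eigsb i) lamb_le lam_le.
Qed.
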